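(* Let $\psi$ be a colouring, let $d\in\mathbb Z$, write $d^+=\max(d,0)$, and let $\xi\in\mathcal C_{d^+}$ be regular and summable. Then the series $\sum_{a\ge d^+}(X^-)^{a-d}(X^+)^a\xi^a(H)$ converges, for the $h$-adic topology, to a unique element $x\in U_h(\psi)$. Moreover $x$ is of degree $d$, and $\psi\ltimes\xi=\psi(x)$.
   Context: $\mathbb k$ is a field of characteristic zero, and $\mathbb k[[h]]$ is the ring of formal power series over $\mathbb k$. For a $\mathbb k$-vector space $V_0$, $V_0[[h]]$ denotes the module of formal series $\sum_{m\ge0}v_mh^m$ with $v_m\in V_0$. $\mathfrak a$ is the Lie algebra over $\mathbb k$ generated by $H,X^-,X^+$ subject to $[H,X^\pm]=\pm2X^\pm$. We set $U_h(\mathfrak a):=U(\mathfrak a)[[h]]$. A colouring is a sequence $\psi=(\psi^k)_{k\ge1}$ of functions $\psi^k:\mathbb Z\to\mathbb k[[h]]$ satisfying: - (C1) $\psi^k(n)\equiv k(n-k+1)\bmod h$; - (C2) $\psi^{n+1}(n)=0$ for all $n\ge0$; - (C3) $\psi^{n+k+1}(n)=\psi^k(-n-2)$ for all $k\ge1$ and all $n\ge0$. $V_h(n,\psi)$ is the representation of $U_h(\mathfrak a)$ on $(\bigoplus_{k\ge0}\mathbb k b_k)[[h]]$ with the following action: - $H.b_k=(n-2k)b_k$; - $X^-.b_k=b_{k+1}$; - $X^+.b_0=0$, and $X^+.b_k=\psi^k(n)b_{k-1}$ for $k\ge1$. $U_h(\psi)$ is the quotient of $U_h(\mathfrak a)$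 by the two-sided ideal of elements that act by zero on $V_h(n,\psi)$ for every $n\in\mathbb Z$. Sequences. For $d\in\mathbb N$, $\mathcal C_d$ is the $\mathbb k[[h]]$-module of sequences $f=(f^k)_{k\ge d}$ of functions $f^k:\mathbb Z\to\mathbb k[[h]]$. We write $f^k(n)=\sum_{m\ge0}f^k_m(n)h^m$ with $f^k_m:\mathbb Z\to\mathbb k$. - $f$ is summable if $f^k\to0$ $h$-adically, i.e. for each $m$ one has $f^k_m\equiv0$ for all sufficiently large $k$. - $f$ is regular if each $f^k_m$ is (the restriction of) a polynomial function of $n$, and for each $m$ the degree of $f^k_m$ is bounded independently of $k$. - For a regular $\xi$, set $\xi^a(H):=\sum_m\xi^a_m(H)h^m\in\mathbb k[H][[h]]$, viewed in $U_h(\psi)$. For a colouring $\psi$ and $\xi\in\mathcal C_d$ with $d\ge0$, define $\psi\ltimes\xi\in\mathcal C_d$ by $$(\psi\ltimes\xi)^k(n)=\sum_{a=d}^k\Big(\prod_{b=k-a+1}^k\psi^b(n)\Big)\xi^a(n-2k)\qquad(k\ge d),$$ where the empty product is $1$. Degree. An element $x\in U_h(\psi)$ is of degree $d\in\mathbb Z$ if, for every $n\in\mathbb Z$, two conditions hold in $V_h(n,\psi)$: - $x.b_k=0$ for $0\le k<d^+$; - $x.b_k=\psi(x)^k(n)\,b_{k-d}$ for some $\psi(x)^k(n)\in\mathbb k[[h]]$, for every $k\ge d^+$. In that case $\psi(x):=(\psi(x)^k)_{k\ge d^+}\in\mathcal C_{d^+}$. *)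

From HB Require Import structures.
From mathcomp Require Import all_boot all_order all_algebra.
Set Implicit Arguments. Unset Strict Implicit. Unset Printing Implicit Defensive.
Import Order.TTheory GRing.Theory Num.Theory.
Local Open Scope ring_scope.

Section Defs.
Variable F : fieldType.

Definition ps := nat -> F.
Definition ps0 : ps := fun _ => 0.
Definition ps1 : ps := fun j => if j == 0%N then 1 else 0.
Definition psadd (a b : ps) : ps := fun j => a j + b j.
Definition psmul (a b : ps) : ps :=
  fun j => \sum_(i < j.+1) a i * b (j - i)%N.
Definition psprod (s : seq ps) : ps := foldr psmul ps1 s.
Definition pssum (s : seq ps) : ps := foldr psadd ps0 s.

(* ---------- colourings: psi k n = psi^k(n) (index k = 0 unused) ---------- *)
Definition colouring (psi : nat -> int -> ps) : Prop :=
  (forall (k : nat) (n : int), (1 <= k)%N ->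
                psi k n 0%N = (k%:Z * (n - k%:Z + 1))%:~R) /\
  (forall (n : nat) (j : nat), psi n.+1 n%:Z j = 0) /\
  (forall (k n : nat) (j : nat), (1 <= k)%N ->
                psi (n + k).+1 n%:Z j = psi k (- n%:Z - 2) j).

(* ---------- the module V_h(n,psi) ----------
   A vector is given by its coefficients: v j i = coefficient of h^j b_i. *)
Definition vec := nat -> nat -> F.
Definition bvec (k : nat) : vec := fun j i => if (j == 0%N) && (i == k) then 1 else 0.
Definition svec (c : ps) (l : nat) : vec := fun j i => if i == l then c j else 0.

Inductive gen := GH | GXm | GXp.

Definition actGen (psi : nat -> int -> ps) (n : int) (g : gen) (v : vec) : vec :=
  match g with
  | GH  => fun j i => (n - 2 * i%:Z)%:~R * v j i
  | GXm => fun j i => if i is i'.+1 then v j i' else 0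
  | GXp => fun j i => \sum_(m < j.+1) psi i.+1 n m * v (j - m)%N i.+1
  end.

(* a word [:: g1; ...; gr] stands for the product g1 g2 ... gr *)
Definition actWord psi n (w : seq gen) (v : vec) : vec :=
  foldr (actGen psi n) v w.

(* an element of the free algebra k<H,X^-,X^+>: a finite linear combination
   of words; elements of U_h are formal series sum_m u_m h^m of those. *)
Definition fpoly := seq (F * seq gen).
Definition fseries := nat -> fpoly.

Definition actPoly psi n (u : fpoly) (v : vec) : vec :=
  fun j i => \sum_(t <- u) t.1 * actWord psi n t.2 v j i.

Definition actSeries psi n (u : fseries) (v : vec) : vec :=
  fun j i => \sum_(m < j.+1) actPoly psi n (u m) v (j - m)%N i.

(* ---------- U_h(psi) ----------
   An element of U_h(psi) is recorded by its action on every basis vector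
   b_k of every V_h(n,psi): M n k = x.b_k in V_h(n,psi). *)
Definition Mat := int -> nat -> vec.

Definition matOf psi (u : fseries) : Mat := fun n k => actSeries psi n u (bvec k).

Definition inUh psi (M : Mat) : Prop :=
  exists u : fseries, forall n k j i, matOf psi u n k j i = M n k j i.

Definition mat_eq (M N : Mat) : Prop := forall n k j i, M n k j i = N n k j i.

(* M - N lies in h^m U_h(psi) *)
Definition in_hpow psi (m : nat) (M N : Mat) : Prop :=
  exists Y, inUh psi Y /\
    forall n k j i, M n k j i - N n k j i = if (j < m)%N then 0 else Y n k (j - m)%N i.

Definition hconv psi (S : nat -> Mat) (x : Mat) : Prop :=
  forall m, exists N0, forall N, (N0 <= N)%N -> in_hpow psi m (S N) x.

(* xi a n = xi^a(n); P a m is the polynomial with P a m (n) = xi^a_m(n) *)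
Definition regular_with (dp : nat) (xi : nat -> int -> ps) (P : nat -> nat -> {poly F}) :=
  (forall a m n, (dp <= a)%N -> xi a n m = (P a m).[n%:~R]) /\
  (forall m, exists D, forall a, (dp <= a)%N -> (size (P a m) <= D)%N).

Definition summable (dp : nat) (xi : nat -> int -> ps) :=
  forall m, exists A, forall a n, (A <= a)%N -> (dp <= a)%N -> xi a n m = 0.

Definition ltimes (psi : nat -> int -> ps) (xi : nat -> int -> ps) (dp k : nat) (n : int) : ps :=
  pssum [seq psmul (psprod [seq psi b n | b <- iota (k - a).+1 a])
                   (xi a (n - 2 * k%:Z)) | a <- iota dp (k.+1 - dp)].

(* the term (X^-)^(a-d) (X^+)^a xi^a(H), with xi^a(H) = sum_m P a m (H) h^m *)
Definition term (d : int) (P : nat -> nat -> {poly F}) (a : nat) : fseries :=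
  fun m => [seq ((P a m)`_i, nseq `|a%:Z - d|%N GXm ++ nseq a GXp ++ nseq i GH)
           | i <- iota 0 (size (P a m))].

Definition partial (d : int) (dp : nat) P (N : nat) : fseries :=
  fun m => flatten [seq term d P a m | a <- iota dp (N - dp)].

(* x is of degree d, with psi(x)^k(n) = c k n *)
Definition degree_coeffs (d : int) (dp : nat) (x : Mat) (c : nat -> int -> ps) :=
  forall n k, 
    ((k < dp)%N -> forall j i, x n k j i = 0) /\
    ((dp <= k)%N -> forall j i, x n k j i = svec (c k n) `|k%:Z - d|%N j i).

Definition of_degree d dp x := exists c, degree_coeffs d dp x c.

End Defs.

Definition dplus (d : int) : nat := `|Num.max d 0|%N.

(* The monomial (X^-)^(a-d) (X^+)^a xi^a(H) sends b_k to 0 when a > k, and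
   otherwise to (prod_{b=k-a+1}^{k} psi^b(n)) xi^a(n-2k) b_(k-d): H scales b_k
   by n-2k, X^+ lowers b_k to psi^k(n) b_(k-1), and X^- raises the index by 1.
   Hence on b_k only the finitely many terms with a <= k act, which gives the
   degree and the coefficient psi |x xi.  Convergence comes from summability:
   for each power h^m, xi^a_m = 0 for large a, and a polynomial vanishing on
   all integers is zero in characteristic 0, so the h^m-part of the partial
   sums is eventually constant. *)
From HB Require Import structures.
From mathcomp Require Import all_boot all_order all_algebra zify.
From Stdlib Require Import FunctionalExtensionality IndefiniteDescription.
Set Implicit Arguments. Unset Strict Implicit. Unset Printing Implicit Defensive.
Import Order.TTheory GRing.Theory Num.Theory.
Local Open Scope ring_scope.

Section PowerSeries.
Variable F : fieldType.
Implicit Types (a b c : ps F).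

Definition ps_trunc (J : nat) a : {poly F} := \poly_(i < J.+1) a i.

Lemma psmul_truncE a b j J : (j <= J)%N -> psmul a b j = (ps_trunc J a * ps_trunc J b)`_j.
Proof.
move=> le_jJ; rewrite /psmul coefM; apply: eq_bigr => [[i lt_ij]] _ /=.
rewrite !coef_poly (leq_trans lt_ij) ?ltnS //.
by rewrite (leq_trans (leq_subr _ _) le_jJ).
Qed.

Lemma coefMl_eq (p q r : {poly F}) j :
  (forall i, (i <= j)%N -> p`_i = q`_i) -> (p * r)`_j = (q * r)`_j.
Proof. by move=> epq; rewrite !coefM; apply: eq_bigr => [[i lt_ij]] _; rewrite epq. Qed.

Lemma coef_ps_trunc_psmul a b J i :
  (i <= J)%N -> (ps_trunc J (psmul a b))`_i = (ps_trunc J a * ps_trunc J b)`_i.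
Proof. by move=> le_iJ; rewrite coef_poly ltnS le_iJ (psmul_truncE _ _ le_iJ). Qed.

Lemma psmulC a b : psmul a b = psmul b a.
Proof. by apply: functional_extensionality => j; rewrite !(psmul_truncE _ _ (leqnn j)) mulrC. Qed.

Lemma psmulA a b c : psmul a (psmul b c) = psmul (psmul a b) c.
Proof.
apply: functional_extensionality => j.
rewrite (psmul_truncE _ _ (leqnn j)) [RHS](psmul_truncE _ _ (leqnn j)).
rewrite mulrC (coefMl_eq _ (fun i => @coef_ps_trunc_psmul b c j i)).
by rewrite (coefMl_eq _ (fun i => @coef_ps_trunc_psmul a b j i)) mulrC mulrA.
Qed.

Lemma psmul1 a : psmul a (ps1 F) = a.
Proof.
apply: functional_extensionality => j; rewrite /psmul big_ord_recr /= subnn mulr1.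
rewrite big1 ?add0r // => [[i lt_ij]] _ /=.
by rewrite /ps1 subn_eq0 leqNgt lt_ij mulr0.
Qed.

Lemma psmulZr a b (s : F) : psmul a (fun j => s * b j) = fun j => s * psmul a b j.
Proof.
apply: functional_extensionality => j; rewrite /psmul mulr_sumr.
by apply: eq_bigr => i _; rewrite mulrCA.
Qed.

Lemma foldr_psmul (s : seq (ps F)) c : foldr (@psmul F) c s = psmul (psprod s) c.
Proof.
elim: s => [|x s IH] /=; first by rewrite psmulC psmul1.
by rewrite IH psmulA.
Qed.

Lemma pssum_mapE (T : Type) (f : T -> ps F) (s : seq T) j :
  pssum [seq f x | x <- s] j = \sum_(x <- s) f x j.
Proof. by elim: s => [|x s IH]; rewrite ?big_nil ?big_cons //= /psadd IH. Qed.

End PowerSeries.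

Section WeightVectors.
Variables (F : fieldType) (psi : nat -> int -> ps F) (n : int).

Definition vec0 : vec F := fun _ _ => 0.

Lemma bvecE k : bvec F k = svec (ps1 F) k.
Proof.
apply: functional_extensionality => j; apply: functional_extensionality => i.
by rewrite /bvec /svec /ps1; case: (i == k); rewrite ?andbT ?andbF.
Qed.

Lemma actGen_vec0 g : actGen psi n g vec0 = vec0.
Proof.
apply: functional_extensionality => j; apply: functional_extensionality => i.
case: g => /=; rewrite /vec0 ?mulr0 //; first by case: i.
by rewrite big1 // => m _; rewrite mulr0.
Qed.

Lemma actWord_vec0 w : actWord psi n w vec0 = vec0.
Proof. by elim: w => [|g w IH] //=; rewrite IH actGen_vec0. Qed.

Lemma actWord_cat w1 w2 v :
  actWord psi n (w1 ++ w2) v = actWord psi n w1 (actWord psi n w2 v).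
Proof. by rewrite /actWord foldr_cat. Qed.

Lemma actGen_H_svec c l :
  actGen psi n GH (svec c l) = svec (fun j => (n - 2 * l%:Z)%:~R * c j) l.
Proof.
apply: functional_extensionality => j; apply: functional_extensionality => i.
by rewrite /= /svec; case: eqP => [->|]; rewrite ?mulr0.
Qed.

Lemma actGen_Xm_svec c l : actGen psi n GXm (svec c l) = svec c l.+1.
Proof.
apply: functional_extensionality => j; apply: functional_extensionality => i.
by case: i.
Qed.

Lemma actGen_Xp_svec c l :
  actGen psi n GXp (svec c l.+1) = svec (psmul (psi l.+1 n) c) l.
Proof.
apply: functional_extensionality => j; apply: functional_extensionality => i.
rewrite /= /svec eqSS; case: eqP => [->|] //.
by rewrite big1 // => m _; rewrite mulr0.
Qed.

Lemma actGen_Xp_svec0 c : actGen psi n GXp (svec c 0) = vec0.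
Proof.
apply: functional_extensionality => j; apply: functional_extensionality => i.
by rewrite /= /svec big1 // => m _; rewrite mulr0.
Qed.

Arguments actGen : simpl never.

Lemma actWord_H_svec e c l : actWord psi n (nseq e GH) (svec c l)
   = svec (fun j => (n - 2 * l%:Z)%:~R ^+ e * c j) l.
Proof.
elim: e => [|e IH] /=.
  by congr svec; apply: functional_extensionality => j; rewrite mul1r.
rewrite IH actGen_H_svec; congr svec; apply: functional_extensionality => j.
by rewrite exprS mulrA.
Qed.

Lemma actWord_Xm_svec e c l : actWord psi n (nseq e GXm) (svec c l) = svec c (l + e).
Proof. by elim: e => [|e IH] /=; rewrite ?addn0 // IH actGen_Xm_svec addnS. Qed.

Lemma actWord_Xp_svec e c l : (e <= l)%N ->
  actWord psi n (nseq e GXp) (svec c l)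
   = svec (foldr (@psmul F) c [seq psi b n | b <- iota (l - e).+1 e]) (l - e).
Proof.
elim: e => [|e IH] le_el /=; first by rewrite subn0.
have lE : (l - e = (l - e.+1).+1)%N by rewrite subnS prednK // subn_gt0.
by rewrite IH ?(ltnW le_el) // lE actGen_Xp_svec -lE.
Qed.

Lemma actWord_Xp_svec_gt e c l : (l < e)%N -> actWord psi n (nseq e GXp) (svec c l) = vec0.
Proof.
move=> lt_le; rewrite -(subnK lt_le) nseqD actWord_cat /= actWord_Xp_svec //.
by rewrite subnn actGen_Xp_svec0 actWord_vec0.
Qed.

End WeightVectors.

Section TermAction.
Variables (F : fieldType) (psi : nat -> int -> ps F) (n : int).
Variables (d : int) (P : nat -> nat -> {poly F}).

Definition raising_coef (k a : nat) : ps F :=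
  psprod [seq psi b n | b <- iota (k - a).+1 a].

Lemma actPoly_term a m k j i : (a <= k)%N ->
  actPoly psi n (term d P a m) (bvec F k) j i =
  if i == (k - a + `|a%:Z - d|)%N then
     (P a m).[(n - 2 * k%:Z)%:~R] * raising_coef k a j else 0.
Proof.
move=> le_ak; rewrite /actPoly /term big_map.
under eq_bigr => e _.
  rewrite /= bvecE !actWord_cat actWord_H_svec actWord_Xp_svec //.
  rewrite actWord_Xm_svec foldr_psmul psmulZr psmul1.
  over.
rewrite /svec /=; case: eqP => _; last by rewrite big1 // => e _; rewrite mulr0.
rewrite horner_coef mulr_suml -(big_mkord xpredT (fun e => (P a m)`_e * _ ^+ e * _)).
by rewrite /index_iota subn0; apply: eq_bigr => e _; rewrite mulrA.
Qed.

Lemma actPoly_term_gt a m k j i : (k < a)%N ->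
  actPoly psi n (term d P a m) (bvec F k) j i = 0.
Proof.
move=> lt_ka; rewrite /actPoly /term big_map big1 // => e _.
rewrite /= bvecE !actWord_cat actWord_H_svec actWord_Xp_svec_gt //.
by rewrite actWord_vec0 /vec0 mulr0.
Qed.

Lemma matOf_term a k j i :
  matOf psi (term d P a) n k j i =
  if (a <= k)%N && (i == (k - a + `|a%:Z - d|)%N) then
    psmul (raising_coef k a) (fun m => (P a m).[(n - 2 * k%:Z)%:~R]) j
  else 0.
Proof.
rewrite /matOf /actSeries; case: leqP => [le_ak|lt_ka] /=.
  under eq_bigr => m _ do rewrite actPoly_term //.
  by case: eqP => _; [rewrite psmulC | rewrite big1].
by rewrite big1 // => m _; rewrite actPoly_term_gt.
Qed.

Lemma matOf_partial dp N k j i :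
  matOf psi (partial d dp P N) n k j i =
  \sum_(a <- iota dp (N - dp)) matOf psi (term d P a) n k j i.
Proof.
rewrite /matOf /actSeries [RHS]exchange_big /=; apply: eq_bigr => m _.
by rewrite /actPoly /partial big_flatten big_map.
Qed.

Lemma matOf_partial_ge dp N k j i : (k < N)%N ->
  matOf psi (partial d dp P N) n k j i = matOf psi (partial d dp P k.+1) n k j i.
Proof.
move=> lt_kN; rewrite !matOf_partial.
have term_gt a : (k < a)%N -> matOf psi (term d P a) n k j i = 0.
  by move=> lt_ka; rewrite matOf_term leqNgt lt_ka.
have [le_dp_k1|lt_k1_dp] := leqP dp k.+1; last first.
  have -> : (k.+1 - dp = 0)%N by lia.
  rewrite big_nil big1_seq // => a /andP[_]; rewrite mem_iota => /andP[le_dp_a _].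
  by apply: term_gt; lia.
have -> : (N - dp = (k.+1 - dp) + (N - k.+1))%N by lia.
rewrite iotaD big_cat /= subnKC // [X in _ + X]big1_seq ?addr0 //.
by move=> a /andP[_]; rewrite mem_iota => /andP[le_k1_a _]; apply: term_gt.
Qed.

End TermAction.

Section HadicTopology.
Variables (F : fieldType) (psi : nat -> int -> ps F).

Definition fseries_sub (s t : fseries F) : fseries F :=
  fun m => s m ++ [seq (- x.1, x.2) | x <- t m].

Lemma actPoly_sub n s t m v j i :
  actPoly psi n (fseries_sub s t m) v j i = actPoly psi n (s m) v j i - actPoly psi n (t m) v j i.
Proof.
rewrite /actPoly big_cat big_map /= -sumrN; congr (_ + _).
by apply: eq_bigr => x _; rewrite mulNr.
Qed.

Lemma in_hpow_matOf (s t : fseries F) M :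
  (forall m, (m < M)%N -> s m = t m) -> in_hpow psi M (matOf psi s) (matOf psi t).
Proof.
move=> est; pose r := fun m => fseries_sub s t (m + M)%N.
exists (matOf psi r); split => [|n k j i]; first by exists r.
rewrite /matOf /actSeries -sumrB; case: ltnP => [lt_jM|le_Mj].
  by rewrite big1 // => [[m lt_mj]] _ /=; rewrite est ?subrr // (leq_trans lt_mj).
rewrite -(big_mkord xpredT (fun m => actPoly psi n (s m) _ (j - m)%N i
                                  - actPoly psi n (t m) _ (j - m)%N i)).
rewrite (@big_cat_nat _ _ _ M) //= ?(leq_trans le_Mj) //.
rewrite big_nat_cond big1 ?add0r; last first.
  by move=> m /andP[/andP[_ lt_mM] _]; rewrite est ?subrr.
rewrite -{1}(add0n M) big_addn big_mkord subSn //.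
by apply: eq_bigr => m _; rewrite actPoly_sub subnDA subnAC.
Qed.

Lemma in_hpow_coef M N m n k j i : (j < m)%N -> in_hpow psi m M N -> M n k j i = N n k j i.
Proof. by move=> lt_jm [Y [_ /(_ n k j i)]]; rewrite lt_jm => /eqP; rewrite subr_eq0 => /eqP. Qed.

Lemma hconv_coef S x n k j i : hconv psi S x ->
  exists N0, forall N, (N0 <= N)%N -> S N n k j i = x n k j i.
Proof.
move=> /(_ j.+1) [N0 conv]; exists N0 => N le_N0N.
exact: in_hpow_coef (ltnSn j) (conv N le_N0N).
Qed.

Lemma hconv_unique S x y : hconv psi S x -> hconv psi S y -> mat_eq x y.
Proof.
move=> Sx Sy n k j i.
have [N1 eq1] := hconv_coef n k j i Sx; have [N2 eq2] := hconv_coef n k j i Sy.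
by rewrite -(eq1 (N1 + N2)%N) ?leq_addr // -(eq2 (N1 + N2)%N) ?leq_addl.
Qed.

End HadicTopology.

Lemma pchar0_natr_inj (F : idomainType) :
  [pchar F] =i pred0 -> injective (fun i : nat => i%:R : F).
Proof.
move=> /pcharf0P charF0.
suff natr_neq m p : (m < p)%N -> (m%:R : F) != p%:R.
  move=> i j /= eq_ij.
  by case: (ltngtP i j) => // lt; move: (natr_neq _ _ lt); rewrite eq_ij eqxx.
move=> lt_mp; apply/eqP => eq_mp; have := charF0 (p - m)%N.
by rewrite natrB ?(ltnW lt_mp) // -eq_mp subrr eqxx subn_eq0 leqNgt lt_mp.
Qed.

Lemma poly_natr_eq0 (F : idomainType) (charF0 : [pchar F] =i pred0) (p : {poly F}) :
  (forall i : nat, p.[i%:R] = 0) -> p = 0.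
Proof.
move=> p_nat0; apply: (@roots_geq_poly_eq0 _ p [seq i%:R | i <- iota 0 (size p)]).
- by apply/allP => x /mapP[i _ ->]; rewrite /root p_nat0.
- by rewrite map_inj_uniq ?iota_uniq //; exact: pchar0_natr_inj.
- by rewrite size_map size_iota.
Qed.

Lemma degree_coeffs_unique (F : fieldType) d dp (x : Mat F) c c' k n j :
  degree_coeffs d dp x c -> degree_coeffs d dp x c' -> (dp <= k)%N -> c k n j = c' k n j.
Proof.
move=> xc xc' le_dp_k.
have := (xc n k).2 le_dp_k j `|k%:Z - d|%N; rewrite (xc' n k).2 // /svec eqxx.
by move=> ->.
Qed.

Section Limit.
Variables (F : fieldType) (charF0 : [pchar F] =i pred0) (psi : nat -> int -> ps F).
Variables (d : int) (xi : nat -> int -> ps F) (P : nat -> nat -> {poly F}).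
Hypotheses (Hreg : regular_with (dplus d) xi P) (Hsum : summable (dplus d) xi).
Local Notation dp := (dplus d).

Lemma regular_summable_poly_eq0 m : exists B, forall a, (B <= a)%N -> P a m = 0.
Proof.
have [A xi0] := Hsum m; exists (maxn A dp) => a.
rewrite geq_max => /andP[le_Aa le_dp_a].
apply: (poly_natr_eq0 charF0) => i.
by rewrite -(Hreg.1 a m i le_dp_a) (xi0 a i le_Aa le_dp_a).
Qed.

Lemma partial_stable m : exists B, forall N, (B <= N)%N ->
  partial d dp P N m = partial d dp P B m.
Proof.
have [B P0] := regular_summable_poly_eq0 m.
have terms0 L B' : (B <= B')%N -> flatten [seq term d P a m | a <- iota B' L] = [::].
  elim: L B' => [|L IH] B' le_BB' //=.
  by rewrite /term P0 ?size_poly0 //= IH // ltnW.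
exists (maxn B dp) => N; rewrite geq_max => /andP[le_BN le_dp_N].
rewrite /partial; have -> : (N - dp = (maxn B dp - dp) + (N - maxn B dp))%N by lia.
rewrite iotaD map_cat flatten_cat subnKC ?leq_maxr //.
by rewrite (terms0 _ (maxn B dp)) ?leq_maxl ?cats0.
Qed.

Definition stable_bound m : nat :=
  proj1_sig (constructive_indefinite_description _ (partial_stable m)).

Definition limit_series : fseries F := fun m => partial d dp P (stable_bound m) m.

Lemma partial_limit_series m N :
  (stable_bound m <= N)%N -> partial d dp P N m = limit_series m.
Proof. exact: (proj2_sig (constructive_indefinite_description _ (partial_stable m)) N). Qed.

Lemma hconv_limit_series :
  hconv psi (fun N => matOf psi (partial d dp P N)) (matOf psi limit_series).
Proof.
move=> M; exists (\max_(m < M) stable_bound m) => N le_maxN.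
apply: in_hpow_matOf => m lt_mM; apply: partial_limit_series; apply: leq_trans le_maxN.
exact: (@leq_bigmax_cond _ _ (fun m : 'I_M => stable_bound m) (Ordinal lt_mM)).
Qed.

Lemma matOf_limit_series n k j i :
  matOf psi limit_series n k j i = matOf psi (partial d dp P k.+1) n k j i.
Proof.
have [N0 conv] := hconv_coef n k j i hconv_limit_series.
by rewrite -(conv (N0 + k.+1)%N) ?leq_addr // matOf_partial_ge // ltn_addl.
Qed.

Lemma degree_limit_series :
  degree_coeffs d dp (matOf psi limit_series) (fun k n => ltimes psi xi dp k n).
Proof.
move=> n k; rewrite /svec; split => [lt_k_dp|le_dp_k] j i.
  by rewrite matOf_limit_series matOf_partial (eqP (_ : (k.+1 - dp == 0)%N)) ?big_nil ?subn_eq0.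
rewrite matOf_limit_series matOf_partial /ltimes pssum_mapE.
have index_of_term a : (dp <= a)%N -> (a <= k)%N ->
    (k - a + `|a%:Z - d|)%N = `|k%:Z - d|%N by rewrite /dplus; lia.
case: eqP => [->|ne_i].
  apply: eq_big_seq => a; rewrite mem_iota subnKC ?(leqW le_dp_k) // => /andP[le_dp_a].
  rewrite ltnS => le_ak; rewrite matOf_term le_ak index_of_term // eqxx.
  by congr psmul; apply: functional_extensionality => m; rewrite (Hreg.1 a m _ le_dp_a).
rewrite big1_seq // => a /andP[_]; rewrite mem_iota subnKC ?(leqW le_dp_k) //.
move=> /andP[le_dp_a]; rewrite ltnS => le_ak.
by rewrite matOf_term le_ak index_of_term //; case: eqP.
Qed.

End Limit.

Theorem mainTheorem5 (F : fieldType) (charF0 : [pchar F] =i pred0)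
  (psi : nat -> int -> ps F) (Hpsi : colouring psi)
  (d : int) (xi : nat -> int -> ps F) (P : nat -> nat -> {poly F})
  (Hreg : regular_with (dplus d) xi P) (Hsum : summable (dplus d) xi) :
  let dp := dplus d in
  exists x : Mat F,
    [/\ inUh psi x,
        hconv psi (fun N => matOf psi (partial d dp P N)) x,
        (forall x', inUh psi x' ->
           hconv psi (fun N => matOf psi (partial d dp P N)) x' -> mat_eq x' x),
        of_degree d dp x &
        (forall c, degree_coeffs d dp x c ->
           forall (k : nat) (n : int) (j : nat), (dp <= k)%N ->
             c k n j = ltimes psi xi dp k n j)].
Proof.
move=> dp; pose u := limit_series charF0 Hreg Hsum.
have conv := hconv_limit_series charF0 psi Hreg Hsum.
have deg := degree_limit_series charF0 psi Hreg Hsum.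
exists (matOf psi u); split.
- by exists u.
- exact: conv.
- by move=> x' _ conv'; apply: hconv_unique conv' conv.
- by exists (fun k n => ltimes psi xi dp k n).
- by move=> c degc k n j; apply: degree_coeffs_unique degc deg.
Qed.
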